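(* Let $\mathcal{M}$ be a finite set of models, each model $\mathfrak{m}$ consisting of at most $Q$ features, with prior $p(\mathfrak{m})$ and marginal likelihood $p(\boldsymbol{y}\mid\mathfrak{m})>0$, and posterior $p(\mathfrak{m}\mid\boldsymbol{y}) = p(\mathfrak{m})p(\boldsymbol{y}\mid\mathfrak{m})/\sum_{\mathfrak{m}'\in\mathcal{M}}p(\mathfrak{m}')p(\boldsymbol{y}\mid\mathfrak{m}')$. Run the GMJMCMC algorithm for $T_{\max}$ population iterations, producing populations $\mathcal{S}_1,\dots,\mathcal{S}_{T_{\max}}$, each a set of $s$ features, and let $M_{\mathcal{S}_t}$ be the set of models visited at iteration $t$ within search space $\mathcal{S}_t$. Let $\mathcal{M}^*$ be the set of all models visited by the algorithm and define \[ \widehat{p}(\mathfrak{m}\mid\boldsymbol{y}) = \frac{p(\mathfrak{m})p(\boldsymbol{y}\mid\mathfrak{m})}{\sum_{\mathfrak{m}'\in\mathcal{M}^*}p(\mathfrak{m}')p(\boldsymbol{y}\mid\mathfrak{m}')}\,\mathrm{I}(\mathfrak{m}\in\mathcal{M}^* ). \] Assume $s\ge Q$ and that $\{(\mathcal{S}_t,M_{\mathcal{S}_t})\}_t$ forms an irreducible Markov chain over its (finite) set of possible states. Then $\widehat{p}(\mathfrak{m}\mid\boldsymbol{y})$ converges to $p(\mathfrak{m}\mid\boldsymbol{y})$ for every model $\mathfrak{m}$ as $T_{\max}\to\infty$.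
   Context: GMJMCMC (genetically modified mode jumping MCMC) is a model search algorithm: at each iteration $t$ it holds a population $\mathcal{S}_t$ of $s$ features (transformations of input covariates), runs an MCMC (mode-jumping MCMC) over the models whose features all belong to $\mathcal{S}_t$ (visiting the model set $M_{\mathcal{S}_t}$, including auxiliary models used to construct proposals), and then generates a new population $\mathcal{S}_{t+1}$ from $\mathcal{S}_t$ by random operators (filtration, mutation, modification, crossover, projection). The model space $\mathcal{M}$ consists of all subsets of at most $Q$ features from a finite feature space. A model is identified with the set of features it includes. *)

From HB Require Import structures.
From mathcomp Require Import all_boot all_order all_algebra.
From mathcomp Require Import all_classical all_reals all_analysis.
Set Implicit Arguments. Unset Strict Implicit. Unset Printing Implicit Defensive.
Import Order.TTheory GRing.Theory Num.Theory.
Import numFieldNormedType.Exports.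
Local Open Scope classical_set_scope.
Local Open Scope ring_scope.

Definition model_space (F : finType) (Q : nat) : {set {set F}} :=
  [set m : {set F} | (#|m| <= Q)%N].

Definition weight (R : realType) (F : finType) (prior lik : {set F} -> R) (m : {set F}) : R :=
  prior m * lik m.

(* Posterior p(m|y) over a set of models A (A = model space: true posterior;
   A = visited models: the renormalized estimate, with indicator). *)
Definition renorm_post (R : realType) (F : finType) (prior lik : {set F} -> R)
  (A : {set {set F}}) (m : {set F}) : R :=
  if m \in A then weight prior lik m / \sum_(m' in A) weight prior lik m' else 0.

Fixpoint kpow (R : realType) (St : finType) (K : St -> St -> R) (n : nat) (x y : St) : R :=
  if n is n'.+1 then \sum_(z : St) K x z * kpow K n' z y else (x == y)%:R.

Definition stochastic (R : realType) (St : finType) (K : St -> St -> R) : Prop :=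
  (forall x y, 0 <= K x y) /\ (forall x, \sum_(y : St) K x y = 1).

Definition irreducible (R : realType) (St : finType) (K : St -> St -> R) : Prop :=
  forall x y, exists n, 0 < kpow K n x y.

Definition path_ev (T : Type) (St : Type) (X : nat -> T -> St) (n : nat) (f : nat -> St)
  : set T := [set w | forall i, (i <= n)%N -> X i w = f i].

Definition markov_chain (d : measure_display) (T : measurableType d) (R : realType)
  (P : probability T R) (St : finType) (X : nat -> T -> St) (K : St -> St -> R) : Prop :=
  stochastic K /\
  (forall n x, measurable [set w | X n w = x]) /\
  (forall n f, P (path_ev X n.+1 f) = (P (path_ev X n f) * (K (f n) (f n.+1))%:E)%E).

Definition visited (T : Type) (St : Type) (F : finType) (vis : St -> {set {set F}})
  (X : nat -> T -> St) (Tmax : nat) (w : T) : {set {set F}} :=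
  \bigcup_(t < Tmax) vis (X t w).

(* Once every state of the chain has occurred, every model with at most [Q]
   features has been visited (since [s >= Q], each such model can be completed
   to a population of size [s]), and from then on the renormalised estimate is
   the posterior itself.  So it
   suffices that a finite irreducible Markov chain almost surely hits every
   state [y].  Irreducibility yields [N] and [q < 1] such that, from any state
   other than [y], the chain avoids [y] during [N] steps with probability at
   most [q]; by the Markov property the probability of avoiding [y] up to time
   [k * N] is then at most [q ^ k]. *)

From HB Require Import structures.
From mathcomp Require Import all_boot all_order all_algebra.
From mathcomp Require Import all_classical all_reals all_analysis.
Import Order.TTheory GRing.Theory Num.Theory.
Import numFieldNormedType.Exports.
Local Open Scope classical_set_scope.
Local Open Scope ring_scope.
Set Implicit Arguments. Unset Strict Implicit. Unset Printing Implicit Defensive.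

Section Kernels.
Variables (R : realType) (St : finType).
Implicit Types (M : St -> St -> R) (x y z : St).

Lemma kpow_ge0 M : (forall x y, 0 <= M x y) -> forall n x y, 0 <= kpow M n x y.
Proof.
move=> M_ge0; elim=> [|n IHn] x y /=; first by rewrite ler0n.
by apply: sumr_ge0 => z _; rewrite mulr_ge0.
Qed.

Lemma kpow_sum1 M : stochastic M -> forall n x, \sum_y kpow M n x y = 1.
Proof.
move=> [_ M1]; elim=> [|n IHn] x /=.
  by rewrite (bigD1 x) //= eqxx big1 ?addr0 // => y; rewrite eq_sym => /negbTE ->.
rewrite exchange_big /= -[RHS](M1 x); apply: eq_bigr => z _.
by rewrite -mulr_sumr IHn mulr1.
Qed.

Lemma kpow_le1 M : stochastic M -> forall n x y, kpow M n x y <= 1.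
Proof.
move=> MS n x y; rewrite -(kpow_sum1 MS n x) (bigD1 y) //= lerDl.
by apply: sumr_ge0 => z _; apply: kpow_ge0; case: MS.
Qed.

Lemma kpow_evolution M (u : nat -> St -> R) :
    (forall n y, u n.+1 y = \sum_x u n x * M x y) ->
  forall n N y, u (n + N)%N y = \sum_x u n x * kpow M N x y.
Proof.
move=> uS n N; elim: N n => [|N IHN] n y.
  by rewrite addn0 (bigD1 y) //= eqxx mulr1 big1 ?addr0 // => x /negbTE ->; rewrite mulr0.
rewrite addnS -addSn IHN; under eq_bigr do rewrite uS mulr_suml.
rewrite exchange_big /=; apply: eq_bigr => x _; rewrite mulr_sumr.
by apply: eq_bigr => z _; rewrite mulrA.
Qed.

Definition taboo M y x z := M x z * (z != y)%:R.

(* The probability that the chain with kernel [M] started at [x] avoids [y]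
   at times 1, ..., n. *)
Definition survival M y n x := \sum_z kpow (taboo M y) n x z.

Section Survival.
Variables (K : St -> St -> R) (y : St).
Hypothesis K_stochastic : stochastic K.

Let K_ge0 : forall x z, 0 <= K x z. Proof. by case: K_stochastic. Qed.

Lemma taboo_ge0 x z : 0 <= taboo K y x z.
Proof. by rewrite mulr_ge0. Qed.

Lemma taboo_le x z : taboo K y x z <= K x z.
Proof. by rewrite /taboo; case: (z != y); rewrite ?mulr1 ?mulr0. Qed.

Lemma survival0 x : survival K y 0 x = 1.
Proof.
by rewrite /survival (bigD1 x) //= eqxx big1 ?addr0 // => z; rewrite eq_sym => /negbTE ->.
Qed.

Lemma survivalS n x :
  survival K y n.+1 x = \sum_z taboo K y x z * survival K y n z.
Proof. by rewrite /survival exchange_big; apply: eq_bigr => z _; rewrite mulr_sumr. Qed.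

Lemma survival_nonincreasing x : {homo survival K y ^~ x : m n / (m <= n)%N >-> n <= m}.
Proof.
apply/nonincreasing_seqP => n; elim: n x => [|n IHn] x.
  rewrite survivalS survival0 -(K_stochastic.2 x); apply: ler_sum => z _.
  by rewrite survival0 mulr1 taboo_le.
by rewrite survivalS [leRHS]survivalS; apply: ler_sum => z _; rewrite ler_wpM2l ?taboo_ge0.
Qed.

Lemma survival_hit n x : x != y -> survival K y n x + kpow K n x y <= 1.
Proof.
elim: n x => [|n IHn] x xy; first by rewrite survival0 /= (negbTE xy) addr0.
rewrite survivalS /= -big_split /= -(K_stochastic.2 x); apply: ler_sum => z _.
have [->|zy] := eqVneq z y.
  by rewrite /taboo eqxx mulr0 mul0r add0r ler_piMr ?kpow_le1.
by rewrite /taboo zy mulr1 -mulrDr ler_piMr ?IHn.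
Qed.

(* Irreducibility gives each [x != y] a time at which [y] is reached from [x]
   with positive probability; since survival is nonincreasing, the maximum of
   these times works for every [x] at once. *)
Lemma survival_uniformly_lt1 : irreducible K ->
  exists N (q : R), [/\ 0 <= q, q < 1 & forall x, x != y -> survival K y N x <= q].
Proof.
move=> Kirr; suff [N [q [q0 q1 Hq]]] : exists N (q : R),
    [/\ 0 <= q, q < 1 & forall x, x \in enum St -> x != y -> survival K y N x <= q].
  by exists N, q; split=> // x; apply: Hq; rewrite mem_enum.
elim: (enum St) => [|x s [N [q [q0 q1 Hq]]]]; first by exists 0%N, 0.
have [n xy_gt0] := Kirr x y.
exists (maxn N n), (Num.max q (1 - kpow K n x y)); split.
- by rewrite le_max q0.
- by rewrite gt_max q1 gtrBl.
move=> z; rewrite in_cons => /orP[/eqP-> xy|zs zy]; rewrite le_max.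
  by rewrite orbC (le_trans (survival_nonincreasing _ (leq_maxr N n))) ?lerBrDr ?survival_hit.
by rewrite (le_trans (survival_nonincreasing _ (leq_maxl N n))) ?Hq.
Qed.

End Survival.
End Kernels.

Section RealProbability.
Context d (T : measurableType d) (R : realType) (P : probability T R).

Definition pr (A : set T) : R := fine (P A).

Lemma prE A : measurable A -> P A = (pr A)%:E.
Proof. by move=> mA; rewrite /pr fineK // fin_num_measure. Qed.

Lemma pr_ge0 A : 0 <= pr A.
Proof. by rewrite /pr fine_ge0. Qed.

Lemma pr_le1 A : measurable A -> pr A <= 1.
Proof. by move=> mA; rewrite -lee_fin -prE // probability_le1. Qed.

Lemma pr0 : pr set0 = 0.
Proof. by rewrite /pr measure0. Qed.

Lemma pr_le A B : measurable A -> measurable B -> A `<=` B -> pr A <= pr B.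
Proof. by move=> mA mB AB; rewrite -lee_fin -!prE // le_measure // inE. Qed.

Lemma pr_total (V : finType) (Y : T -> V) A :
    (forall v, measurable [set w | Y w = v]) -> measurable A ->
  pr A = \sum_v pr (A `&` [set w | Y w = v]).
Proof.
move=> mY mA; have mAY v : measurable (A `&` [set w | Y w = v]) by exact: measurableI.
have {1}-> : A = \bigcup_(v in [set: V]) (A `&` [set w | Y w = v]).
  by apply/seteqP; split=> [w Aw|w [v _ []] //]; exists (Y w).
rewrite /pr measure_fin_bigcup //; last 2 first.
- exact: finite_finset.
- by move=> u v _ _ [w [[_ <-] [_ <-]]].
rewrite fsbig_finite ?finite_finset //= (perm_big (index_enum V)); last first.
  apply: uniq_perm => [||v]; [exact: finmap.fset_uniq|exact: index_enum_uniq|].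
  by have := in_fset_set (@finite_finset V [set: V]) v; rewrite in_setT mem_index_enum.
by rewrite (eq_bigr _ (fun v _ => prE (mAY v))) sumEFin.
Qed.

End RealProbability.

Lemma le0_geometric_bound (R : realType) (q c : R) :
  0 <= q < 1 -> (forall k, c <= q ^+ k) -> c <= 0.
Proof.
move=> /andP[q0 q1] c_le; rewrite leNgt; apply/negP => c_gt0.
have q_norm_lt1 : `|q| < 1 by rewrite ger0_norm.
have [k /=] := filter_ex (cvgr0_norm_lt _ (cvg_expr q_norm_lt1) _ c_gt0).
by rewrite ger0_norm ?exprn_ge0 // => qk_lt; move: (c_le k); rewrite leNgt qk_lt.
Qed.

Section MarkovChain.
Context d (T : measurableType d) (R : realType) (P : probability T R).
Variables (St : finType) (X : nat -> T -> St) (K : St -> St -> R).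
Hypothesis X_measurable : forall n x, measurable [set w | X n w = x].
Hypothesis X_path : forall n f,
  P (path_ev X n.+1 f) = (P (path_ev X n f) * (K (f n) (f n.+1))%:E)%E.

Definition trace n w : n.+1.-tuple St := Tuple (introT eqP (size_mkseq (X^~ w) n.+1)).

Lemma tnth_trace n w (i : 'I_n.+1) : tnth (trace n w) i = X i w.
Proof. by rewrite (tnth_nth (X 0 w)) /= nth_mkseq. Qed.

Lemma traceS n w : val (trace n.+1 w) = rcons (trace n w) (X n.+1 w).
Proof. exact: mkseqS. Qed.

Lemma trace_eqE x0 n w t : trace n w = t <-> path_ev X n (nth x0 t) w.
Proof.
split=> [<- i le_in|Ht]; first by rewrite /= nth_mkseq.
apply: val_inj; apply: (@eq_from_nth _ x0) => [|i]; rewrite ?size_tuple // => lt_in.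
by rewrite /= nth_mkseq // Ht.
Qed.

Lemma trace_eq_path x0 n t : [set w | trace n w = t] = path_ev X n (nth x0 t).
Proof. by apply/seteqP; split=> w /(trace_eqE x0). Qed.

Lemma measurable_path_ev n f : measurable (path_ev X n f).
Proof.
rewrite (_ : path_ev X n f = \bigcap_(i in `I_n.+1) [set w | X i w = f i]).
  by apply: bigcap_measurableType => i _.
by apply/seteqP; split=> w Hw i /Hw.
Qed.

Lemma measurable_trace_eq n t : measurable [set w | trace n w = t].
Proof. by rewrite (trace_eq_path (thead t)); exact: measurable_path_ev. Qed.

Lemma measurable_trace_pred n (E : pred (n.+1.-tuple St)) :
  measurable [set w | E (trace n w)].
Proof.
rewrite (_ : [set w | _] = \bigcup_(t in [set t | E t]) [set w | trace n w = t]).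
  by apply: fin_bigcup_measurable => [|t _]; [exact: finite_finset|exact: measurable_trace_eq].
by apply/seteqP; split=> [w Ew|w [t Et /= ->] //]; exists (trace n w).
Qed.

Lemma pr_trace_eq_next n t y :
  pr P ([set w | trace n w = t] `&` [set w | X n.+1 w = y]) =
  pr P [set w | trace n w = t] * K (tnth t ord_max) y.
Proof.
(* With default [y], [nth y t] is the path [t] continued by [y] at time [n + 1]. *)
have -> : [set w | trace n w = t] `&` [set w | X n.+1 w = y] = path_ev X n.+1 (nth y t).
  rewrite (trace_eq_path y); apply/seteqP; split=> [w [Ht Hy] i|w Hw].
    by rewrite leq_eqVlt => /orP[/eqP->|/Ht //]; rewrite nth_default ?size_tuple.
  split=> [i le_in|/=]; first by rewrite Hw ?(leqW le_in).
  by rewrite Hw // nth_default ?size_tuple.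
rewrite /pr X_path -(trace_eq_path y) (prE P (measurable_trace_eq t)) -EFinM /=.
by rewrite (tnth_nth y) [nth y t n.+1]nth_default ?size_tuple.
Qed.

Lemma pr_trace_sum n (E : pred (n.+1.-tuple St)) B : measurable B ->
  pr P ([set w | E (trace n w)] `&` B) = \sum_(t | E t) pr P ([set w | trace n w = t] `&` B).
Proof.
move=> mB; rewrite (pr_total P (@measurable_trace_eq n)); last first.
  exact: measurableI (measurable_trace_pred E) mB.
rewrite [RHS]big_mkcond; apply: eq_bigr => t _; case: ifP => Et.
  by congr (pr P _); apply/seteqP; split=> [w [[_ Bw] Ht]|w [/= Ht Bw]]; rewrite /= ?Ht.
rewrite (_ : _ `&` _ = set0) ?pr0 //; apply/seteqP; split=> // w [[/= + _] Ht].
by rewrite Ht Et.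
Qed.

Lemma pr_trace_markov n (E : pred (n.+1.-tuple St)) y :
  pr P ([set w | E (trace n w)] `&` [set w | X n.+1 w = y]) =
  \sum_x pr P ([set w | E (trace n w)] `&` [set w | X n w = x]) * K x y.
Proof.
rewrite pr_trace_sum //; under eq_bigr do rewrite pr_trace_eq_next.
under [RHS]eq_bigr do rewrite pr_trace_sum // mulr_suml.
rewrite [RHS]exchange_big /=; apply: eq_bigr => t _.
rewrite (bigD1 (tnth t ord_max)) //= big1 ?addr0 => [|x xt].
  congr (pr P _ * _); apply/seteqP; split=> [w Ht|w []] //.
  by split=> //; rewrite /= -Ht tnth_trace.
rewrite (_ : _ `&` _ = set0) ?pr0 ?mul0r //; apply/seteqP; split=> // w [/= Ht Hx].
by move: xt; rewrite -Ht tnth_trace Hx eqxx.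
Qed.

Lemma mem_trace_last n w : X n w \in trace n w.
Proof. by have := mem_tnth ord_max (trace n w); rewrite tnth_trace. Qed.

Lemma mem_traceS n w x : (x \in trace n.+1 w) = (x == X n.+1 w) || (x \in trace n w).
Proof. by rewrite -in_cons -mem_rcons -traceS. Qed.

Section Hitting.
Variable y : St.
Hypothesis K_stochastic : stochastic K.

Let avoid n : set T := [set w | y \notin trace n w].
Let measurable_avoid n : measurable (avoid n).
Proof. exact: (measurable_trace_pred (fun t => y \notin t)). Qed.

Let avoid_at n x := pr P (avoid n `&` [set w | X n w = x]).

Let avoid_at_y n : avoid_at n y = 0.
Proof.
rewrite /avoid_at (_ : _ `&` _ = set0) ?pr0 //; apply/seteqP; split=> // w [/= + Xy].
by rewrite /avoid /= -Xy mem_trace_last.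
Qed.

Let avoid_atS n x : avoid_at n.+1 x = \sum_z avoid_at n z * taboo K y z x.
Proof.
have [->|xy] := eqVneq x y.
  by rewrite avoid_at_y big1 // => z _; rewrite /taboo eqxx /= !mulr0.
rewrite /avoid_at.
have -> : avoid n.+1 `&` [set w | X n.+1 w = x] = avoid n `&` [set w | X n.+1 w = x].
  apply/seteqP; split=> w [/= + Xx]; rewrite /avoid /= mem_traceS Xx eq_sym (negbTE xy) //.
rewrite /avoid (pr_trace_markov (fun t => y \notin t)).
by apply: eq_bigr => z _; rewrite /taboo xy mulr1.
Qed.

Let avoid_sum n : pr P (avoid n) = \sum_x avoid_at n x.
Proof. exact: pr_total. Qed.

Let avoid_decay N q : (forall x, x != y -> survival K y N x <= q) ->
  forall n, pr P (avoid (n + N)) <= q * pr P (avoid n).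
Proof.
move=> Hq n; rewrite !avoid_sum mulr_sumr.
under eq_bigr do rewrite (kpow_evolution avoid_atS).
rewrite exchange_big /=; apply: ler_sum => x _; rewrite -mulr_sumr mulrC.
have [->|xy] := eqVneq x y; first by rewrite avoid_at_y !mulr0.
by rewrite ler_wpM2r ?pr_ge0 ?Hq.
Qed.

Lemma never_hit_negligible : irreducible K -> P.-negligible [set w | forall t, X t w != y].
Proof.
move=> Kirr; have [N [q [q_ge0 q_lt1 Hq]]] := survival_uniformly_lt1 y K_stochastic Kirr.
have avoid_geo k : pr P (avoid (k * N)) <= q ^+ k.
  elim: k => [|k IHk]; first by rewrite mul0n expr0 pr_le1.
  rewrite mulSn addnC exprS (le_trans (avoid_decay Hq _)) // ler_wpM2l //.
have m_never := bigcapT_measurable measurable_avoid.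
exists (\bigcap_n avoid n); split=> //.
  rewrite (prE P m_never); congr (_%:E); apply/eqP; rewrite eq_le pr_ge0 andbT.
  apply: (le0_geometric_bound (q := q)) => [|k]; first by rewrite q_ge0.
  by apply: le_trans (avoid_geo k); apply: pr_le => // w; apply.
move=> w /= no_hit n _; apply/tnthP => -[i].
by rewrite tnth_trace => /esym; apply/eqP.
Qed.

End Hitting.

End MarkovChain.

Lemma markov_chain_visits_all d (T : measurableType d) (R : realType)
    (P : probability T R) (St : finType) (X : nat -> T -> St) (K : St -> St -> R) :
  markov_chain P X K -> irreducible K -> {ae P, forall w y, exists t, X t w = y}.
Proof.
move=> [K_st [X_meas X_path]] Kirr.
have hits y : {ae P, forall w, exists t, X t w = y}.
  apply: negligibleS (never_hit_negligible X_meas X_path y K_st Kirr) => w /= no_hit t.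
  by apply/eqP => Xt; apply: no_hit; exists t.
pose hits_code n w := if @unpickle St n is Some y then exists t, X t w = y else True.
apply: filterS (ae_foralln (P := hits_code) _) => [w Hw y|n].
  by have := Hw (pickle y); rewrite /hits_code pickleK.
by rewrite /hits_code; case: (unpickle n) => [y|]; [exact: hits|exact: aeW].
Qed.

Lemma exists_superset_card (F : finType) (m : {set F}) n :
  (#|m| <= n <= #|F|)%N -> exists2 S : {set F}, m \subset S & #|S| = n.
Proof.
case/andP; elim: n => [|n IHn].
  by rewrite leqn0 cards_eq0 => /eqP-> _; exists finset.set0; rewrite ?subxx ?cards0.
rewrite leq_eqVlt => /orP[/eqP <- _|]; first by exists m.
rewrite ltnS => mn nF; have [S mS cS] := IHn mn (ltnW nF).
have /set0Pn[a] : ~: S != finset.set0 by rewrite -card_gt0 -(ltn_add2l #|S|) cardsC addn0 cS.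
rewrite finset.in_setC => aS; exists (a |: S); last by rewrite cardsU1 aS cS.
by rewrite (fintype.subset_trans mS) ?finset.subsetUr.
Qed.

Lemma model_in_some_vis (F : finType) (Q s : nat) (St : finType)
    (pop : St -> {set F}) (vis : St -> {set {set F}}) (x0 : St) :
    (forall x, #|pop x| = s) ->
    (forall S m : {set F}, #|S| = s -> m \subset S -> m \in model_space F Q ->
       exists x, pop x = S /\ m \in vis x) ->
    (Q <= s)%N ->
  forall m, m \in model_space F Q -> exists x, m \in vis x.
Proof.
move=> card_pop Hposs le_Qs m mQ; have le_mQ : (#|m| <= Q)%N by rewrite inE in mQ.
have [|S mS cS] := @exists_superset_card F m s.
  by rewrite (leq_trans le_mQ le_Qs) -(card_pop x0) max_card.
by have [x [_ mx]] := Hposs S m cS mS mQ; exists x.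
Qed.

Lemma bigcup_eventually_eq (A St : finType) (vis : St -> {set A}) (M : {set A})
    (x : nat -> St) :
    (forall y, exists t, x t = y) -> (forall y, vis y \subset M) ->
    (forall m, m \in M -> exists y, m \in vis y) ->
  \forall n \near \oo, (\bigcup_(t < n) vis (x t))%SET = M.
Proof.
move=> x_onto visM Mvis; have [time timeP] := choice x_onto.
exists (\max_y (time y).+1)%N => // n /= le_n.
apply/setP => m; apply/bigcupP/idP => [[t _ /(fintype.subsetP (visM _))] //|/Mvis[y my]].
have lt_n : (time y < n)%N by apply: leq_trans le_n; exact: (leq_bigmax y).
by exists (Ordinal lt_n); rewrite //= timeP.
Qed.

Unset Implicit Arguments.

Theorem theorem1 (R : realType) (F : finType) (Q s : nat)
  (prior lik : {set F} -> R)
  (Hprior0 : forall m, m \in model_space F Q -> 0 <= prior m)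
  (Hprior1 : \sum_(m in model_space F Q) prior m = 1)
  (Hlik : forall m, m \in model_space F Q -> 0 < lik m)
  (St : finType) (pop : St -> {set F}) (vis : St -> {set {set F}})
  (Hpop : forall x, #|pop x| = s)
  (Hvis : forall x m, m \in vis x -> m \subset pop x /\ m \in model_space F Q)
  (Hposs : forall (S : {set F}) (m : {set F}), #|S| = s -> m \subset S ->
     m \in model_space F Q -> exists x, pop x = S /\ m \in vis x)
  (HsQ : (Q <= s)%N)
  (d : measure_display) (T : measurableType d) (P : probability T R)
  (X : nat -> T -> St) (K : St -> St -> R)
  (HX : markov_chain P X K) (Hirr : irreducible K) :
  {ae P, forall w, forall m, m \in model_space F Q ->
     (fun Tmax => renorm_post prior lik (visited vis X Tmax w) m) @ \oo
       --> renorm_post prior lik (model_space F Q) m}.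
Proof.
apply: filterS (markov_chain_visits_all HX Hirr) => w visits_all m _.
have visited_full : \forall Tmax \near \oo, visited vis X Tmax w = model_space F Q.
  apply: (bigcup_eventually_eq (x := X^~ w)) => [y|x|].
  - exact: visits_all.
  - by apply/fintype.subsetP => m' /Hvis[].
  - exact: (model_in_some_vis (X 0%N w) Hpop Hposs HsQ).
by apply: cvg_near_cst; apply: filterS visited_full => Tmax ->.
Qed.
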